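(* For each integer $n \geq 1$ there is a group word $w(x_0, x_1, \ldots, x_{n-1}, y)$ in $n+1$ variables such that the following holds: if $G$ is any group and $f: (G \setminus \{1_G\})^n \rightarrow G$ is any function, then there exist a group $H$ and an element $c \in H$ such that (a) $G \leq H$; (b) $c \in H \setminus G$; (c) for all $\overline{g} = (g_0,\ldots,g_{n-1}) \in (G\setminus \{1_G\})^n$ we have $w(g_0,\ldots,g_{n-1}, c) = f(\overline{g})$ in $H$; (d) $H$ is generated by $G \cup \{c\}$. *)

From mathcomp Require Import all_boot.
Set Implicit Arguments.
Unset Strict Implicit.
Unset Printing Implicit Defensive.

Record group_on (T : Type) := GroupOn {
  gmul : T -> T -> T;
  gone : T;
  ginv : T -> T;
  gmulA : forall x y z, gmul x (gmul y z) = gmul (gmul x y) z;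
  gmul1 : forall x, gmul gone x = x;
  gmulV : forall x, gmul (ginv x) x = gone
}.

Inductive word (n : nat) : Type :=
| wx : 'I_n -> word n
| wy : word n
| wone : word n
| wmul : word n -> word n -> word n
| winv : word n -> word n.

Fixpoint weval (n : nat) (T : Type) (G : group_on T)
    (g : 'I_n -> T) (c : T) (w : word n) : T :=
  match w with
  | wx i => g i
  | wy => c
  | wone => gone G
  | wmul u v => gmul G (weval G g c u) (weval G g c v)
  | winv u => ginv G (weval G g c u)
  end.

Definition is_hom (T U : Type) (G : group_on T) (H : group_on U) (f : T -> U) :=
  forall x y, f (gmul G x y) = gmul H (f x) (f y).

Definition is_subgroup (U : Type) (H : group_on U) (S : U -> Prop) :=
  S (gone H) /\ (forall x y, S x -> S y -> S (gmul H x y)) /\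
  (forall x, S x -> S (ginv H x)).

Definition generated_by (U : Type) (H : group_on U) (A : U -> Prop) :=
  forall S, is_subgroup H S -> (forall a, A a -> S a) -> forall h, S h.

(* A tuple (g_0, ..., g_{n-1}) is encoded as g_0 s g_1 s ... g_{n-1} s in the free product
   G * <s>; distinct tuples give distinct elements, none of them in G. Realize over G * <s> the
   unary function sending each encoding to f of its tuple and every other element to s: the unary
   word evaluated at (g_0, c) is then s, and substituting it for s in the encoding gives an n-ary
   word evaluating to f.

   For n = 1 let K = G * F(a, b) and U = G * F(t, y_g | g <> 1). The map iota : U -> K fixing G,
   with t |-> b and y_g |-> Y(g) = (a g a^-1) g (b g b^-1) (a g a^-1)^-1 g^-2, is injective by a
   small cancellation argument, and so is psi = sigma iota tau, where sigma is the automorphism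
   g |-> a g a^-1, a |-> b a^-1, b |-> a^-1 of K and tau the automorphism y_g |-> t f(g) t^-1 y_g
   of U. In the HNN extension of K in which c conjugates iota(u) to psi(u) we get
   c g c^-1 = a g a^-1 and c^-1 g c = b g b^-1, so Y(g) is a word in g and c, and
   c Y(g) c^-1 = f(g) sigma(Y(g)) expresses f(g) by a fixed word in g and c. The HNN extension is
   built as a permutation group, paired with Z/2 to keep c outside G, and cut down to the
   subgroup generated by G and c. *)

From mathcomp Require Import all_boot zify.
From Stdlib Require Import ClassicalEpsilon FunctionalExtensionality.
From Stdlib Require Import ProofIrrelevance PropExtensionality.

Set Implicit Arguments.
Unset Strict Implicit.
Unset Printing Implicit Defensive.

Lemma sig_inj (A : Type) (P : A -> Prop) (x y : {a | P a}) :
  proj1_sig x = proj1_sig y -> x = y.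
Proof. exact: (eq_sig_hprop (fun a => proof_irrelevance (P a))). Qed.

Section GroupFacts.
Variables (T : Type) (G : group_on T).
Local Notation "x * y" := (gmul G x y).
Local Notation "1" := (gone G).
Local Notation "x ^-1" := (ginv G x).

Lemma gmulVr x : x * x^-1 = 1.
Proof.
have idem : (x * x^-1) * (x * x^-1) = x * x^-1.
  by rewrite -gmulA (gmulA G x^-1) gmulV gmul1.
by rewrite -[RHS](gmulV G (x * x^-1)) -{3}idem gmulA gmulV gmul1.
Qed.

Lemma gmul1r x : x * 1 = x.
Proof. by rewrite -(gmulV G x) gmulA gmulVr gmul1. Qed.

Lemma gmulKl x y : x^-1 * (x * y) = y.
Proof. by rewrite gmulA gmulV gmul1. Qed.

Lemma gmulKVl x y : x * (x^-1 * y) = y.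
Proof. by rewrite gmulA gmulVr gmul1. Qed.

Lemma gmulKr x y : x * y * y^-1 = x.
Proof. by rewrite -gmulA gmulVr gmul1r. Qed.

Lemma gmulKVr x y : x * y^-1 * y = x.
Proof. by rewrite -gmulA gmulV gmul1r. Qed.

Lemma gmul_injl x : injective (gmul G x).
Proof. by move=> y z eq_xy_xz; rewrite -(gmulKl x y) eq_xy_xz gmulKl. Qed.

Lemma gmul_injr x : injective (gmul G ^~ x).
Proof. by move=> y z eq_yx_zx; rewrite -(gmulKr y x) /= eq_yx_zx gmulKr. Qed.

Lemma ginv_unique x y : x * y = 1 -> y = x^-1.
Proof. by move=> xy1; apply: (@gmul_injl x); rewrite xy1 gmulVr. Qed.

Lemma ginvK x : (x^-1)^-1 = x.
Proof. by symmetry; apply: ginv_unique; rewrite gmulV. Qed.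

Lemma ginvM x y : (x * y)^-1 = y^-1 * x^-1.
Proof. by symmetry; apply: ginv_unique; rewrite gmulA gmulKr gmulVr. Qed.

Lemma ginv1 : 1^-1 = 1.
Proof. by symmetry; apply: ginv_unique; rewrite gmul1. Qed.

Lemma gmul_idPl x y : x * y = x -> y = 1.
Proof. by move=> xy_x; apply: (@gmul_injl x); rewrite xy_x gmul1r. Qed.

End GroupFacts.

Ltac group_simpl :=
  repeat progress rewrite ?ginvM ?ginvK ?ginv1 ?gmul1 ?gmul1r ?gmulA
                          ?gmulKr ?gmulKVr ?gmulVr ?gmulV.

Section Homomorphisms.
Variables (T U : Type) (G : group_on T) (H : group_on U) (f : T -> U).
Hypothesis f_hom : is_hom G H f.

Lemma hom1 : f (gone G) = gone H.
Proof. by apply: (@gmul_idPl _ H (f (gone G))); rewrite -f_hom gmul1. Qed.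

Lemma homV x : f (ginv G x) = ginv H (f x).
Proof. by apply: ginv_unique; rewrite -f_hom gmulVr hom1. Qed.

Lemma hom_inj_of_ker1 : (forall x, f x = gone H -> x = gone G) -> injective f.
Proof.
move=> ker1 x y fx_fy; apply: (@gmul_injr _ G (ginv G y)); rewrite /= gmulVr.
by apply: ker1; rewrite f_hom homV fx_fy gmulVr.
Qed.

End Homomorphisms.

Lemma hom_comp (A B C : Type) (GA : group_on A) (GB : group_on B) (GC : group_on C)
    (f : A -> B) (g : B -> C) :
  is_hom GA GB f -> is_hom GB GC g -> is_hom GA GC (fun x => g (f x)).
Proof. by move=> f_hom g_hom x y; rewrite f_hom g_hom. Qed.

Section Conjugation.
Variables (U : Type) (M : group_on U).
Local Notation "x * y" := (gmul M x y).
Local Notation "x ^-1" := (ginv M x).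

Definition gconj (c x : U) : U := c * x * c^-1.

Lemma gconjK c x : gconj c^-1 (gconj c x) = x.
Proof. by rewrite /gconj; group_simpl. Qed.

Lemma gconj_gconj c d x : gconj c (gconj d x) = gconj (gconj c d) (gconj c x).
Proof. by rewrite /gconj; group_simpl. Qed.

End Conjugation.

Lemma gconj_hom (A B : Type) (GA : group_on A) (GB : group_on B) (h : A -> B) c x :
  is_hom GA GB h -> h (gconj GA c x) = gconj GB (h c) (h x).
Proof. by move=> h_hom; rewrite /gconj !h_hom (homV h_hom). Qed.

Lemma conj_hom (A B : Type) (GA : group_on A) (GB : group_on B) (a : A -> B) (c : B) :
  is_hom GA GB a -> is_hom GA GB (fun x => gconj GB c (a x)).
Proof. by move=> a_hom x y; rewrite /gconj a_hom; group_simpl. Qed.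

Lemma hom_eq_subgroup (A B : Type) (GA : group_on A) (GB : group_on B) (f1 f2 : A -> B) :
  is_hom GA GB f1 -> is_hom GA GB f2 -> is_subgroup GA (fun x => f1 x = f2 x).
Proof.
move=> f1_hom f2_hom; split; first by rewrite (hom1 f1_hom) (hom1 f2_hom).
split=> [x y eq_x eq_y | x eq_x]; first by rewrite f1_hom f2_hom eq_x eq_y.
by rewrite (homV f1_hom) (homV f2_hom) eq_x.
Qed.

Record perm (X : Type) := Perm {
  pfun : X -> X;
  pinv : X -> X;
  pfunK : forall x, pinv (pfun x) = x;
  pinvK : forall x, pfun (pinv x) = x }.
Arguments Perm {X}.

Lemma perm_ext X (p q : perm X) : (forall x, pfun p x = pfun q x) -> p = q.
Proof.
case: p q => [f g fK gK] [f' g' fK' gK'] /= eq_f.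
have ef : f = f' by apply: functional_extensionality.
subst f'.
have eg : g = g' by apply: functional_extensionality => x; rewrite -{1}(gK' x) fK.
subst g'.
by congr Perm; apply: proof_irrelevance.
Qed.

Section SymmetricGroup.
Variable X : Type.

Definition perm_mul (p q : perm X) : perm X.
Proof.
refine (Perm (fun x => pfun p (pfun q x)) (fun x => pinv q (pinv p x)) _ _) => x.
  by rewrite !pfunK.
by rewrite !pinvK.
Defined.

Definition perm_one : perm X := Perm id id (fun _ => erefl) (fun _ => erefl).

Definition perm_inv (p : perm X) : perm X := Perm (pinv p) (pfun p) (pinvK p) (pfunK p).

Definition sym_group : group_on (perm X).
Proof.
refine (@GroupOn _ perm_mul perm_one perm_inv _ _ _) => *; apply: perm_ext => //= x.
exact: pfunK.
Defined.

End SymmetricGroup.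

Definition prod_group (A B : Type) (GA : group_on A) (GB : group_on B) : group_on (A * B).
Proof.
refine (@GroupOn _ (fun x y => (gmul GA x.1 y.1, gmul GB x.2 y.2)) (gone GA, gone GB)
          (fun x => (ginv GA x.1, ginv GB x.2)) _ _ _).
- by move=> [? ?] [? ?] [? ?] /=; rewrite !gmulA.
- by move=> [? ?] /=; rewrite !gmul1.
- by move=> [? ?] /=; rewrite !gmulV.
Defined.

Definition bool_group : group_on bool.
Proof. exact: (@GroupOn _ addb false id addbA addFb addbb). Defined.

Section GeneratedSubgroup.
Variables (U : Type) (M : group_on U) (A : U -> Prop).

Inductive generated : U -> Prop :=
| gen_base x : A x -> generated x
| gen_one : generated (gone M)
| gen_mul x y : generated x -> generated y -> generated (gmul M x y)
| gen_inv x : generated x -> generated (ginv M x).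

Definition gen_group : group_on {x | generated x}.
Proof.
refine (@GroupOn _
  (fun x y => exist _ (gmul M (proj1_sig x) (proj1_sig y)) (gen_mul (proj2_sig x) (proj2_sig y)))
  (exist _ (gone M) gen_one)
  (fun x => exist _ (ginv M (proj1_sig x)) (gen_inv (proj2_sig x))) _ _ _)
  => *; apply: sig_inj; [exact: gmulA | exact: gmul1 | exact: gmulV].
Defined.

Lemma gen_group_generated : generated_by gen_group (fun h => A (proj1_sig h)).
Proof.
move=> S [S1 [SM SV]] SA [x gx].
elim: gx (gx) => {x} [x Ax | | x y gx IHx gy IHy | x gx IHx] q.
- exact: SA.
- by have -> : exist _ _ q = gone gen_group by apply: sig_inj.
- have -> : exist _ _ q = gmul gen_group (exist _ x gx) (exist _ y gy) by apply: sig_inj.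
  exact: SM.
- have -> : exist _ _ q = ginv gen_group (exist _ x gx) by apply: sig_inj.
  exact: SV.
Qed.

End GeneratedSubgroup.

Notation dec := excluded_middle_informative.

Section FreeProduct.
Variables (T J : Type) (G : group_on T).
Local Notation "x * y" := (gmul G x y).

(* The free product of G with the free group on J is modelled as F(T * J) ⋊ G: the letter
   ((h, j), true) stands for h t_j h^-1 and ((h, j), false) for its inverse. *)
Local Notation letter := ((T * J) * bool)%type.

Definition linv (x : letter) : letter := (x.1, ~~ x.2).
Definition lconj (k : T) (x : letter) : letter := ((k * x.1.1, x.1.2), x.2).

Definition cons_red (x : letter) (w : seq letter) : seq letter :=
  if w is y :: w' then (if dec (y = linv x) then w' else x :: w) else [:: x].

Fixpoint reduced (w : seq letter) : Prop :=
  match w with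
  | x :: ((y :: _) as w') => y <> linv x /\ reduced w'
  | _ => True
  end.

Lemma linvK : involutive linv.
Proof. by case=> a b; rewrite /linv negbK. Qed.

Lemma reduced_cons x w : reduced (x :: w) -> reduced w.
Proof. by case: w => //= y w []. Qed.

Lemma cons_red_reduced x w : reduced w -> reduced (cons_red x w).
Proof.
case: w => //= y w red_w; case: dec => [_ | ne_y] /=; last by [].
exact: reduced_cons red_w.
Qed.

Lemma cons_redK x w : reduced w -> cons_red (linv x) (cons_red x w) = w.
Proof.
case: w => [|y w] /=; first by rewrite linvK; case: dec => // /(_ erefl).
case: dec => [eq_y | ne_y] red_yw /=; last by rewrite linvK; case: dec => // /(_ erefl).
by subst y; case: w red_yw => [|z w] //= [ne_z _]; case: dec.
Qed.

Definition fmul (u v : seq letter) : seq letter := foldr cons_red v u.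
Definition finv (u : seq letter) : seq letter := rev (map linv u).
Definition freduce (w : seq letter) : seq letter := fmul w [::].

Lemma fmul_reduced u v : reduced v -> reduced (fmul u v).
Proof. by move=> red_v; elim: u => //= x u IHu; apply: cons_red_reduced. Qed.

Lemma fmul_cat u1 u2 v : fmul (u1 ++ u2) v = fmul u1 (fmul u2 v).
Proof. exact: foldr_cat. Qed.

Lemma fmul_cons_red x z w : reduced w -> fmul (cons_red x z) w = cons_red x (fmul z w).
Proof.
case: z => //= y z red_w; case: dec => // eq_y; subst y => /=.
by rewrite -{1}[x]linvK cons_redK //; apply: fmul_reduced.
Qed.

Lemma fmulA u v w : reduced v -> reduced w -> fmul (fmul u v) w = fmul u (fmul v w).
Proof. by move=> red_v red_w; elim: u => //= x u IHu; rewrite fmul_cons_red // IHu. Qed.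

Lemma fmulw0 u : reduced u -> fmul u [::] = u.
Proof.
elim: u => //= x u IHu red_xu; rewrite IHu; last exact: reduced_cons red_xu.
by case: u red_xu {IHu} => //= y u [ne_y _]; case: dec.
Qed.

Lemma fmulKw u w : reduced w -> fmul (finv u) (fmul u w) = w.
Proof.
move=> red_w; elim: u => //= x u IHu.
rewrite /finv /= rev_cons -cats1 fmul_cat /= cons_redK //; exact: fmul_reduced.
Qed.

Lemma finvK : involutive finv.
Proof. by move=> u; rewrite /finv map_rev revK -map_comp (eq_map linvK) map_id. Qed.

Lemma fmulwK u v : reduced v -> fmul u (fmul (finv u) v) = v.
Proof. by move=> red_v; rewrite -{1}[u]finvK fmulKw. Qed.

Lemma fmulVw u : reduced u -> fmul (finv u) u = [::].
Proof. by move=> red_u; rewrite -{2}[u]fmulw0 // fmulKw. Qed.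

Lemma freduce_reduced w : reduced (freduce w).
Proof. exact: fmul_reduced. Qed.

Lemma freduce_id w : reduced w -> freduce w = w.
Proof. exact: fmulw0. Qed.

Lemma fmul_freduce u v : reduced v -> fmul (freduce u) v = fmul u v.
Proof. by move=> red_v; rewrite /freduce fmulA. Qed.

Lemma freduce_cat u v : freduce (u ++ v) = fmul u (freduce v).
Proof. exact: fmul_cat. Qed.

Lemma fmul_finv_freduce w v : reduced v -> fmul (finv (freduce w)) v = fmul (finv w) v.
Proof.
move=> red_v; rewrite -{2}(fmulwK (freduce w) red_v) fmul_freduce ?fmulKw //.
all: exact: fmul_reduced.
Qed.

Lemma lconj_linv k x : lconj k (linv x) = linv (lconj k x).
Proof. by []. Qed.

Lemma lconj_inj k : injective (lconj k).
Proof. by case=> [[h j] b] [[h' j'] b'] [/(@gmul_injl _ G k) -> -> ->]. Qed.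

Lemma lconjM k k' x : lconj (k * k') x = lconj k (lconj k' x).
Proof. by rewrite /lconj /= gmulA. Qed.

Lemma lconj1 x : lconj (gone G) x = x.
Proof. by case: x => [[h j] b]; rewrite /lconj /= gmul1. Qed.

Lemma map_lconj1 w : map (lconj (gone G)) w = w.
Proof. by rewrite (eq_map lconj1) map_id. Qed.

Lemma map_lconjM k k' w : map (lconj (k * k')) w = map (lconj k) (map (lconj k') w).
Proof. by rewrite -map_comp; apply: eq_map => x; rewrite lconjM. Qed.

Lemma map_lconj_cons_red k x w :
  map (lconj k) (cons_red x w) = cons_red (lconj k x) (map (lconj k) w).
Proof.
case: w => //= y w; case: dec => [eq_y | ne_y]; case: dec => [eq_ky | ne_ky] //=.
  by subst y; case: (ne_ky (lconj_linv k x)).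
by case: ne_y; apply: (lconj_inj (k := k)); rewrite lconj_linv.
Qed.

Lemma map_lconj_fmul k u v : map (lconj k) (fmul u v) = fmul (map (lconj k) u) (map (lconj k) v).
Proof. by elim: u => //= x u IHu; rewrite map_lconj_cons_red IHu. Qed.

Lemma map_lconj_reduced k w : reduced w -> reduced (map (lconj k) w).
Proof.
elim: w => //= x [|y w] IHw //= [ne_y red_w]; split; last exact: IHw.
by rewrite -lconj_linv => /(lconj_inj (k := k)).
Qed.


Lemma freduce_map_lconj k w : freduce (map (lconj k) w) = map (lconj k) (freduce w).
Proof. by rewrite /freduce map_lconj_fmul. Qed.

End FreeProduct.

Section FreeProductGroup.
Variables (T J : Type) (G : group_on T).
Local Notation "x * y" := (gmul G x y).
Local Notation letter := ((T * J) * bool)%type.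
Local Notation lconj := (lconj G).

Definition fp_elt : Type := {p : seq letter * T | reduced p.1}.

Definition fp_mk (w : seq letter) (k : T) : fp_elt := exist _ (freduce w, k) (freduce_reduced w).
Definition fp_word (p : fp_elt) : seq letter := (proj1_sig p).1.
Definition fp_base (p : fp_elt) : T := (proj1_sig p).2.

Lemma fp_word_reduced p : reduced (fp_word p).
Proof. exact: proj2_sig p. Qed.

Lemma fp_word_mk w k : fp_word (fp_mk w k) = freduce w.
Proof. by []. Qed.


Lemma fp_eta p : p = fp_mk (fp_word p) (fp_base p).
Proof. by apply: sig_inj; case: p => [[w k] red_w] /=; rewrite freduce_id. Qed.

Lemma fp_mk_eq w k w' k' : freduce w = freduce w' -> k = k' -> fp_mk w k = fp_mk w' k'.
Proof. by move=> eq_w eq_k; apply: sig_inj; rewrite /= eq_w eq_k. Qed.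

Definition fp_mul (p q : fp_elt) : fp_elt :=
  fp_mk (fmul (fp_word p) (map (lconj (fp_base p)) (fp_word q))) (fp_base p * fp_base q).
Definition fp_one : fp_elt := fp_mk [::] (gone G).
Definition fp_inv (p : fp_elt) : fp_elt :=
  fp_mk (map (lconj (ginv G (fp_base p))) (finv (fp_word p))) (ginv G (fp_base p)).

Lemma fp_mul_mk w k w' k' :
  fp_mul (fp_mk w k) (fp_mk w' k') = fp_mk (w ++ map (lconj k) w') (k * k').
Proof.
apply: fp_mk_eq => //; rewrite /fp_mul /fp_word /fp_base /=.
rewrite freduce_id; last by apply: fmul_reduced; apply: map_lconj_reduced; apply: freduce_reduced.
rewrite freduce_cat fmul_freduce; last by apply: map_lconj_reduced; apply: freduce_reduced.
by rewrite freduce_map_lconj.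
Qed.

Lemma fp_inv_mk w k : fp_inv (fp_mk w k) = fp_mk (map (lconj (ginv G k)) (finv w)) (ginv G k).
Proof.
apply: fp_mk_eq => //; rewrite /fp_inv /fp_word /fp_base /= !freduce_map_lconj.
by rewrite /freduce fmul_finv_freduce.
Qed.

Lemma fp_mulA p q r : fp_mul p (fp_mul q r) = fp_mul (fp_mul p q) r.
Proof.
rewrite (fp_eta p) (fp_eta q) (fp_eta r) !fp_mul_mk.
by apply: fp_mk_eq; rewrite ?gmulA // map_cat -map_lconjM catA.
Qed.

Lemma fp_mul1 p : fp_mul fp_one p = p.
Proof. by rewrite /fp_one (fp_eta p) fp_mul_mk map_lconj1 gmul1. Qed.

Lemma fp_mulV p : fp_mul (fp_inv p) p = fp_one.
Proof.
rewrite (fp_eta p) fp_inv_mk fp_mul_mk gmulV; apply: fp_mk_eq => //.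
rewrite -map_cat freduce_map_lconj freduce_cat freduce_id ?fmulVw //; exact: fp_word_reduced.
Qed.

Definition fp_group : group_on fp_elt := GroupOn fp_mulA fp_mul1 fp_mulV.

Definition fp_in (g : T) : fp_elt := fp_mk [::] g.
Definition fp_gen (j : J) : fp_elt := fp_mk [:: ((gone G, j), true)] (gone G).

Lemma fp_in_hom : is_hom G fp_group fp_in.
Proof. by move=> x y; rewrite /= fp_mul_mk. Qed.

Lemma fp_in_inj : injective fp_in.
Proof. by move=> x y /(congr1 fp_base). Qed.

Lemma fp_mk_letter h j b :
  fp_mk [:: ((h, j), b)] (gone G) =
  let c := gconj fp_group (fp_in h) (fp_gen j) in
  if b then c else ginv fp_group c.
Proof.
rewrite /= /fp_in /fp_gen fp_inv_mk !fp_mul_mk !gmul1r gmulVr.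
case: b; rewrite ?fp_inv_mk ?ginv1; apply: fp_mk_eq; rewrite //= /lconj /= ?gmul1r ?ginv1 ?gmul1 //.
Qed.

Lemma fp_group_generated :
  generated_by fp_group (fun p => (exists g, p = fp_in g) \/ (exists j, p = fp_gen j)).
Proof.
move=> S [S1 [SM SV]] Sgen.
have S_in g : S (fp_in g) by apply: (Sgen); left; exists g.
have S_word w : S (fp_mk w (gone G)).
  elim: w => [|[[h j] b] w IHw]; first exact: S_in.
  have -> : fp_mk (((h, j), b) :: w) (gone G) =
            gmul fp_group (fp_mk [:: ((h, j), b)] (gone G)) (fp_mk w (gone G)).
    by rewrite /= fp_mul_mk map_lconj1 gmul1.
  apply: (SM) => //; rewrite fp_mk_letter.
  have S_c : S (gconj fp_group (fp_in h) (fp_gen j)).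
    by apply: (SM); [apply: (SM) | apply: (SV)]; rewrite // ; apply: (Sgen); right; exists j.
  by case: b => //; apply: (SV).
move=> p; rewrite (fp_eta p).
have -> : fp_mk (fp_word p) (fp_base p) =
          gmul fp_group (fp_mk (fp_word p) (gone G)) (fp_in (fp_base p)).
  by rewrite /= fp_mul_mk cats0 gmul1.
exact: (SM).
Qed.

Lemma fp_hom_ext (V : Type) (M : group_on V) (f1 f2 : fp_elt -> V) :
  is_hom fp_group M f1 -> is_hom fp_group M f2 ->
  (forall g, f1 (fp_in g) = f2 (fp_in g)) -> (forall j, f1 (fp_gen j) = f2 (fp_gen j)) ->
  forall p, f1 p = f2 p.
Proof.
move=> f1_hom f2_hom eq_in eq_gen; apply: fp_group_generated (hom_eq_subgroup f1_hom f2_hom) _.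
by move=> _ [[g ->] | [j ->]].
Qed.

Section Lift.
Variables (V : Type) (M : group_on V) (alpha : T -> V) (m : J -> V).
Hypothesis alpha_hom : is_hom G M alpha.
Local Notation "x ** y" := (gmul M x y) (at level 40, left associativity).
Local Notation iM := (ginv M).

Definition eval_letter (x : letter) : V :=
  let e := gconj M (alpha x.1.1) (m x.1.2) in if x.2 then e else iM e.

Definition eval_word (w : seq letter) : V := foldr (fun x v => eval_letter x ** v) (gone M) w.

Lemma eval_letter_linv x : eval_letter (linv x) = iM (eval_letter x).
Proof. by case: x => [[h j] []]; rewrite /eval_letter /= ?ginvK. Qed.

Lemma eval_word_cons_red x w : eval_word (cons_red x w) = eval_letter x ** eval_word w.
Proof.
case: w => //= y w; case: dec => //= eq_y.
by rewrite eq_y eval_letter_linv gmulA gmulVr gmul1.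
Qed.

Lemma eval_word_cat u v : eval_word (u ++ v) = eval_word u ** eval_word v.
Proof. by elim: u => [|x u IHu] /=; rewrite ?gmul1 // IHu gmulA. Qed.

Lemma eval_word_freduce w : eval_word (freduce w) = eval_word w.
Proof.
rewrite /freduce; elim: w => //= x w IHw.
by rewrite eval_word_cons_red IHw.
Qed.

Lemma eval_letter_lconj k x : eval_letter (lconj k x) = gconj M (alpha k) (eval_letter x).
Proof. by case: x => [[h j] []]; rewrite /eval_letter /gconj /= alpha_hom; group_simpl. Qed.

Lemma eval_word_lconj k w : eval_word (map (lconj k) w) = gconj M (alpha k) (eval_word w).
Proof.
elim: w => [|x w IHw] /=; first by rewrite /gconj gmul1r gmulVr.
by rewrite IHw eval_letter_lconj /gconj; group_simpl.
Qed.

Definition fp_lift (p : fp_elt) : V := eval_word (fp_word p) ** alpha (fp_base p).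

Lemma fp_lift_mk w k : fp_lift (fp_mk w k) = eval_word w ** alpha k.
Proof. by rewrite /fp_lift /= eval_word_freduce. Qed.

Lemma fp_lift_hom : is_hom fp_group M fp_lift.
Proof.
move=> p q; rewrite (fp_eta p) (fp_eta q) /= fp_mul_mk !fp_lift_mk.
by rewrite eval_word_cat eval_word_lconj alpha_hom /gconj !gmulA gmulKVr.
Qed.

Lemma fp_lift_in g : fp_lift (fp_in g) = alpha g.
Proof. by rewrite fp_lift_mk gmul1. Qed.

Lemma fp_lift_gen j : fp_lift (fp_gen j) = m j.
Proof. by rewrite fp_lift_mk /= /eval_letter /gconj /= (hom1 alpha_hom) ginv1 !gmul1r gmul1. Qed.

End Lift.

Lemma fp_mul_mk1 w w' : fp_mul (fp_mk w (gone G)) (fp_mk w' (gone G)) = fp_mk (w ++ w') (gone G).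
Proof. by rewrite fp_mul_mk map_lconj1 gmul1. Qed.

End FreeProductGroup.

Section Substitution.
Variables (T J J' : Type) (G : group_on T) (mw : J -> seq ((T * J') * bool)).

Definition subst_letter (x : (T * J) * bool) : seq ((T * J') * bool) :=
  let w := map (lconj G x.1.1) (mw x.1.2) in if x.2 then w else finv w.

Lemma fp_lift_subst ws k :
  fp_lift (fp_group J' G) (fp_in J') (fun j => fp_mk (mw j) (gone G)) (fp_mk ws k) =
  fp_mk (flatten (map subst_letter ws)) k.
Proof.
have eval_ws : eval_word (fp_group J' G) (fp_in J') (fun j => fp_mk (mw j) (gone G)) ws =
               fp_mk (flatten (map subst_letter ws)) (gone G).
  elim: ws => [|[[h j] b] ws IHws] //=; rewrite IHws /eval_letter /subst_letter /=.
  rewrite /fp_in /= !fp_mul_mk !gmul1r fp_inv_mk gmulVr cats0.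
  by case: b; rewrite /= ?ginv1 ?map_lconj1 fp_mul_mk1.
by rewrite fp_lift_mk eval_ws /fp_in /= fp_mul_mk cats0 gmul1.
Qed.

End Substitution.

Section Cancellation.
Variables (T J : Type).
Local Notation letter := ((T * J) * bool)%type.

Lemma reduced_catl (u v : seq letter) : reduced (u ++ v) -> reduced u.
Proof.
elim: u => // x u IHu; case: u IHu => //= y u IHu [ne_y red_yu].
by split=> //; apply: IHu.
Qed.

Lemma reduced_rcons2 (u : seq letter) z x :
  reduced (rcons (rcons u z) x) <-> reduced (rcons u z) /\ x <> linv z.
Proof.
elim: u => [|a [|b u] IHu] /=; first by split=> [[]|[]].
  by split=> [[ne [ne' _]] | [[ne _] ne']].
move: IHu => /= ->.
by split=> [[ne [red_u ne']] | [[ne red_u] ne']].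
Qed.

Lemma finv_reduced (u : seq letter) : reduced u -> reduced (finv u).
Proof.
elim: u => // x [|y u] IHu // [ne_y red_yu].
rewrite /finv /= !rev_cons reduced_rcons2 -rev_cons; split; first exact: IHu.
by rewrite (linvK y) => eq_x; apply: ne_y; rewrite -eq_x.
Qed.

Lemma reduced_all_pos (w : seq letter) : all (fun x => x.2) w -> reduced w.
Proof.
elim: w => // x [|y w] IHw //= /and3P [pos_x pos_y pos_w]; split.
  by move=> eq_y; move: pos_y; rewrite eq_y /linv /= pos_x.
by apply: IHw; rewrite /= pos_y.
Qed.

Fixpoint cancel_len (ru v : seq letter) : nat :=
  match ru, v with
  | x :: ru', y :: v' => if dec (y = linv x) then (cancel_len ru' v').+1 else 0
  | _, _ => 0
  end.

Lemma cancel_len_rcons (u : seq letter) x w :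
  reduced (rcons u x) -> cancel_len (rev u) (x :: w) = 0.
Proof.
case/lastP: u => [|u z] //; rewrite rev_rcons /= reduced_rcons2 => -[_ ne_x].
by case: dec.
Qed.

Lemma fmul_cancel (u v : seq letter) : reduced u -> reduced v ->
  fmul u v = take (size u - cancel_len (rev u) v) u ++ drop (cancel_len (rev u) v) v.
Proof.
elim/last_ind: u v => [|u x IHu] v red_ux red_v; first by rewrite /= drop0.
have red_u : reduced u by apply: reduced_catl (x :: [::]) _; rewrite cats1.
rewrite rev_rcons -cats1 fmul_cat /= size_cat /= addn1.
case: v red_v => [|y v] red_v /=.
  by rewrite IHu // cancel_len_rcons // subn0 take_size take_oversize ?size_cat ?addn1 // cats0.
case: (dec (y = linv x)) => [eq_y | ne_y] /=.
  subst y; rewrite IHu //; last exact: reduced_cons red_v.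
  by rewrite subSS takel_cat // leq_subr.
have red_xyv : reduced [:: x, y & v] by split.
by rewrite IHu // cancel_len_rcons // !subn0 take_size take_oversize ?size_cat ?addn1 // -catA.
Qed.

Lemma cancel_len_take (ru V R : seq letter) m :
  cancel_len ru V < m -> m <= size V -> cancel_len ru (take m V ++ R) = cancel_len ru V.
Proof.
elim: ru V m => [|x ru IHru] [|y V] [|m] //=.
by case: (dec (y = linv x)) => //= eq_y lt_m le_m; rewrite IHru.
Qed.

Lemma cancel_len_cons0 (x y : letter) ru v :
  y.1.2 <> x.1.2 -> cancel_len (x :: ru) (y :: v) = 0.
Proof. by move=> ne_gen /=; case: dec => // eq_y; case: ne_gen; rewrite eq_y. Qed.

Lemma cancel_len3 (a1 a2 a3 b1 b2 b3 : letter) r v :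
  2 < cancel_len [:: a1, a2, a3 & r] [:: b1, b2, b3 & v] ->
  [/\ b1 = linv a1, b2 = linv a2 & b3 = linv a3].
Proof. by rewrite /=; do 3 case: dec => //. Qed.

Section SmallCancellation.
Variables (J' : Type) (img : ((T * J') * bool)%type -> seq letter).
Hypotheses (img_reduced : forall x, reduced (img x)) (img_nonempty : forall x, img x <> [::]).
Hypothesis img_small_cancel : forall x y, y <> linv x ->
  2 * cancel_len (rev (img x)) (img y) < size (img x) /\
  2 * cancel_len (rev (img x)) (img y) < size (img y).

Definition fsubst (ws : seq ((T * J') * bool)) : seq letter := freduce (flatten (map img ws)).

Lemma fsubst_reduced ws : reduced (fsubst ws).
Proof. exact: freduce_reduced. Qed.

Lemma fsubst_cons x ws : fsubst (x :: ws) = fmul (img x) (fsubst ws).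
Proof. exact: freduce_cat. Qed.

Lemma fsubst_head x ws : reduced (x :: ws) ->
  exists m R, fsubst (x :: ws) = take m (img x) ++ R /\ size (img x) < 2 * m /\ m <= size (img x).
Proof.
elim: ws x => [|y ws IHws] x red_xws.
  exists (size (img x)), [::]; rewrite fsubst_cons fmulw0 // take_size cats0; split=> //.
  by case: (img x) (@img_nonempty x) => //= *; lia.
have [ne_y red_yws] := red_xws.
have [m [R [eq_y [lt_m le_m]]]] := IHws y red_yws.
have [small_x small_y] := img_small_cancel ne_y.
set k := cancel_len (rev (img x)) (img y).
have eq_k : cancel_len (rev (img x)) (fsubst (y :: ws)) = k.
  by rewrite eq_y cancel_len_take //; lia.
exists (size (img x) - k), (drop k (fsubst (y :: ws))); split; last by lia.
by rewrite fsubst_cons fmul_cancel ?eq_k //; apply: fsubst_reduced.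
Qed.

Lemma fsubst_nonempty ws : reduced ws -> ws <> [::] -> fsubst ws <> [::].
Proof.
case: ws => [|x ws] // red_xws _.
have [m [R [-> [lt_m le_m]]]] := fsubst_head red_xws.
case: (img x) (@img_nonempty x) lt_m le_m => // a l _ lt_m le_m.
by case: m lt_m le_m => [|m] //=; lia.
Qed.

End SmallCancellation.
End Cancellation.

Section HNNExtension.
Variables (P Q : Type) (K : group_on P) (U : group_on Q).
Local Notation "x * y" := (gmul K x y).

Section RightCosets.
Variable i : Q -> P.
Hypotheses (i_hom : is_hom U K i) (i_inj : injective i).

Definition same_coset (k r : P) : Prop := exists u, r = i u * k.

Definition coset_rep (k : P) : P := epsilon (inhabits (gone K)) (same_coset k).

Lemma coset_rep_spec k : same_coset k (coset_rep k).
Proof. by apply: epsilon_spec; exists k, (gone U); rewrite (hom1 i_hom) gmul1. Qed.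

Lemma coset_rep_eq k k' : same_coset k k' -> coset_rep k = coset_rep k'.
Proof.
move=> [u ->]; congr epsilon; apply: functional_extensionality => r.
apply: propositional_extensionality; split=> -[v ->].
  by exists (gmul U v (ginv U u)); rewrite i_hom (homV i_hom) -gmulA gmulKl.
by exists (gmul U v u); rewrite i_hom gmulA.
Qed.

Lemma coset_rep_id k : coset_rep (coset_rep k) = coset_rep k.
Proof. by symmetry; apply: coset_rep_eq; apply: coset_rep_spec. Qed.

Lemma coset_rep_mul u r : coset_rep r = r -> coset_rep (i u * r) = r.
Proof. by move=> rep_r; rewrite -(@coset_rep_eq r) //; exists u. Qed.

Definition coset_part (k : P) : Q := epsilon (inhabits (gone U)) (fun u => k = i u * coset_rep k).

Lemma coset_decomp k : k = i (coset_part k) * coset_rep k.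
Proof.
apply: (epsilon_spec _ (fun u => k = i u * coset_rep k)).
have [u eq_u] := coset_rep_spec k.
by exists (ginv U u); rewrite eq_u (homV i_hom) gmulKl.
Qed.

Lemma coset_part_mul u r : coset_rep r = r -> coset_part (i u * r) = u.
Proof.
move=> rep_r; apply: i_inj; apply: (@gmul_injr _ K r).
by rewrite /= -{2}(coset_rep_mul u rep_r) -coset_decomp.
Qed.

End RightCosets.

Variables (i1 i2 : Q -> P).
Hypotheses (i1_hom : is_hom U K i1) (i2_hom : is_hom U K i2).
Hypotheses (i1_inj : injective i1) (i2_inj : injective i2).

Definition reps1 : Type := {r : P | coset_rep i1 r = r}.
Definition reps2 : Type := {r : P | coset_rep i2 r = r}.

Definition rep1 (k : P) : reps1 := exist _ (coset_rep i1 k) (coset_rep_id i1_hom k).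
Definition rep2 (k : P) : reps2 := exist _ (coset_rep i2 k) (coset_rep_id i2_hom k).

Definition scons (A : Type) (a : A) (s : nat -> A) : nat -> A :=
  fun n => if n is n'.+1 then s n' else a.

Lemma scons_eta (A : Type) (s : nat -> A) : scons (s 0) (fun n => s n.+1) = s.
Proof. by apply: functional_extensionality => -[]. Qed.

(* The stable letter acts on K x (stacks of i1-representatives) x (stacks of i2-representatives):
   it strips the i1-coset representative of the K-coordinate, pushes it on the first stack, and
   pops an i2-representative from the second stack to rebuild the K-coordinate. *)
Definition hnn_space : Type := (P * ((nat -> reps1) * (nat -> reps2)))%type.

Definition hnn_fun (x : hnn_space) : hnn_space :=
  let: (k, (s1, s2)) := x in
  (i2 (coset_part i1 k) * proj1_sig (s2 0), (scons (rep1 k) s1, fun n => s2 n.+1)).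

Definition hnn_invfun (x : hnn_space) : hnn_space :=
  let: (k, (s1, s2)) := x in
  (i1 (coset_part i2 k) * proj1_sig (s1 0), (fun n => s1 n.+1, scons (rep2 k) s2)).

Lemma hnn_funK x : hnn_invfun (hnn_fun x) = x.
Proof.
case: x => k [s1 s2] /=; have rep_s := proj2_sig (s2 0).
rewrite (coset_part_mul i2_hom i2_inj _ rep_s).
have -> : rep2 (i2 (coset_part i1 k) * proj1_sig (s2 0)) = s2 0.
  by apply: sig_inj; apply: coset_rep_mul.
by rewrite scons_eta -coset_decomp.
Qed.

Lemma hnn_invfunK x : hnn_fun (hnn_invfun x) = x.
Proof.
case: x => k [s1 s2] /=; have rep_s := proj2_sig (s1 0).
rewrite (coset_part_mul i1_hom i1_inj _ rep_s).
have -> : rep1 (i1 (coset_part i2 k) * proj1_sig (s1 0)) = s1 0.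
  by apply: sig_inj; apply: coset_rep_mul.
by rewrite scons_eta -coset_decomp.
Qed.

Definition hnn_t : perm hnn_space := Perm hnn_fun hnn_invfun hnn_funK hnn_invfunK.

Definition hnn_act (k : P) : perm hnn_space.
Proof.
refine (Perm (fun x => (k * x.1, x.2)) (fun x => (ginv K k * x.1, x.2)) _ _) => -[k' s] /=.
  by rewrite gmulKl.
by rewrite gmulKVl.
Defined.

Lemma hnn_act_hom : is_hom K (sym_group hnn_space) hnn_act.
Proof. by move=> k k'; apply: perm_ext => -[k'' s] /=; rewrite gmulA. Qed.

Lemma hnn_act_inj : injective hnn_act.
Proof.
move=> k k' /(congr1 (fun p => (pfun p (gone K, (fun=> rep1 (gone K), fun=> rep2 (gone K)))).1)).
by rewrite /= !gmul1r.
Qed.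

Lemma hnn_t_conj u :
  gmul (sym_group hnn_space) hnn_t (hnn_act (i1 u)) =
  gmul (sym_group hnn_space) (hnn_act (i2 u)) hnn_t.
Proof.
apply: perm_ext => -[k [s1 s2]] /=.
have -> : rep1 (i1 u * k) = rep1 k.
  by apply: sig_inj; symmetry; apply: (coset_rep_eq i1_hom); exists u.
have -> : coset_part i1 (i1 u * k) = gmul U u (coset_part i1 k).
  rewrite {1}(coset_decomp i1_hom k) gmulA -i1_hom.
  by apply: (coset_part_mul i1_hom i1_inj); apply: coset_rep_id.
by rewrite i2_hom gmulA.
Qed.

End HNNExtension.

Theorem hnn_embedding (P Q : Type) (K : group_on P) (U : group_on Q) (i1 i2 : Q -> P) :
  is_hom U K i1 -> is_hom U K i2 -> injective i1 -> injective i2 ->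
  exists (Y : Type) (act : P -> perm Y) (t : perm Y),
    is_hom K (sym_group Y) act /\ injective act /\
    forall u, gmul (sym_group Y) t (act (i1 u)) = gmul (sym_group Y) (act (i2 u)) t.
Proof.
move=> i1_hom i2_hom i1_inj i2_inj.
exists (hnn_space K i1 i2), (hnn_act K i1 i2), (hnn_t i1_hom i2_hom i1_inj i2_inj).
split; first exact: hnn_act_hom.
split; first exact: hnn_act_inj.
exact: hnn_t_conj.
Qed.

Section YWord.
Variables (U : Type) (M : group_on U).
Local Notation "x * y" := (gmul M x y).
Local Notation "x ^-1" := (ginv M x).

Definition yword (p x q : U) : U := p * (x * (q * (p^-1 * (x^-1 * x^-1)))).

Definition decode (x c : U) : U :=
  let A := gconj M c x in let B := gconj M c^-1 x in
  gconj M c (yword A x B) * (yword B A x)^-1.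

End YWord.

Lemma yword_hom (A B : Type) (GA : group_on A) (GB : group_on B) (h : A -> B) p x q :
  is_hom GA GB h -> h (yword GA p x q) = yword GB (h p) (h x) (h q).
Proof. by move=> h_hom; rewrite /yword !h_hom !(homV h_hom). Qed.

Section Sigma.
Variables (T : Type) (G : group_on T).
Local Notation K := (fp_group bool G).
Local Notation fp_in := (fp_in bool).

Definition gen_a : fp_elt T bool := fp_gen G true.
Definition gen_b : fp_elt T bool := fp_gen G false.
Definition conj_a (g : T) : fp_elt T bool := gconj K gen_a (fp_in g).
Definition conj_b (g : T) : fp_elt T bool := gconj K gen_b (fp_in g).

Lemma conj_a_hom : is_hom G K conj_a.
Proof. exact: conj_hom (fp_in_hom _ _). Qed.

Lemma conj_b_hom : is_hom G K conj_b.
Proof. exact: conj_hom (fp_in_hom _ _). Qed.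

Definition swap_gen (j : bool) : fp_elt T bool :=
  if j then gmul K gen_b (ginv K gen_a) else ginv K gen_a.
Definition swap_inv_gen (j : bool) : fp_elt T bool :=
  if j then ginv K gen_b else gmul K gen_a (ginv K gen_b).

Definition sigma : fp_elt T bool -> fp_elt T bool := fp_lift K conj_a swap_gen.
Definition sigma_inv : fp_elt T bool -> fp_elt T bool := fp_lift K conj_b swap_inv_gen.

Lemma sigma_hom : is_hom K K sigma.
Proof. exact: fp_lift_hom conj_a_hom. Qed.

Lemma sigma_inv_hom : is_hom K K sigma_inv.
Proof. exact: fp_lift_hom conj_b_hom. Qed.

Lemma sigma_in g : sigma (fp_in g) = conj_a g.
Proof. exact: fp_lift_in. Qed.

Lemma sigma_b : sigma gen_b = ginv K gen_a.
Proof. exact: (fp_lift_gen swap_gen conj_a_hom false). Qed.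

Lemma sigma_conj_a g : sigma (conj_a g) = conj_b g.
Proof.
rewrite /conj_a (gconj_hom _ _ sigma_hom) sigma_in /sigma (fp_lift_gen _ conj_a_hom).
by rewrite /swap_gen /conj_a /conj_b /gconj; group_simpl.
Qed.

Lemma sigma_conj_b g : sigma (conj_b g) = fp_in g.
Proof.
by rewrite /conj_b (gconj_hom _ _ sigma_hom) sigma_in sigma_b /conj_a /gconj; group_simpl.
Qed.

Lemma sigmaK p : sigma_inv (sigma p) = p.
Proof.
apply: (fp_hom_ext (hom_comp sigma_hom sigma_inv_hom) (fun _ _ => erefl)) => [g | []].
- rewrite sigma_in /conj_a (gconj_hom _ _ sigma_inv_hom) /sigma_inv fp_lift_in.
  rewrite (fp_lift_gen _ conj_b_hom).
  by rewrite /swap_inv_gen /conj_b /gconj; group_simpl.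
- rewrite [sigma _](fp_lift_gen _ conj_a_hom) sigma_inv_hom (homV sigma_inv_hom).
  by rewrite /sigma_inv !(fp_lift_gen _ conj_b_hom) /swap_inv_gen; group_simpl.
- rewrite sigma_b (homV sigma_inv_hom) /sigma_inv (fp_lift_gen _ conj_b_hom).
  by rewrite /swap_inv_gen; group_simpl.
Qed.

Lemma sigma_inj : injective sigma.
Proof. by move=> p q eq_pq; rewrite -(sigmaK p) -(sigmaK q) eq_pq. Qed.


End Sigma.

Section YSubstitution.
Variables (T : Type) (G : group_on T).
Local Notation "x * y" := (gmul G x y).
Local Notation K := (fp_group bool G).
Local Notation nontriv := {g : T | g <> gone G}.
Local Notation KU := (fp_group (option nontriv) G).

Definition ylist (g : T) : seq ((T * bool) * bool) :=
  [:: ((gone G, true), true); ((g, true), false); ((g * g, false), true);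
      ((g * g * g, false), false); ((g * g * g, true), true); ((g * g, true), false)].

Lemma ylist_yword g : fp_mk (ylist g) (gone G) = yword K (conj_a G g) (fp_in bool g) (conj_b G g).
Proof.
rewrite /yword /conj_a /conj_b /gconj /gen_a /gen_b /fp_gen /fp_in /=.
rewrite !(fp_mul_mk, fp_inv_mk); apply: fp_mk_eq; last by group_simpl.
by rewrite /lconj /=; group_simpl.
Qed.

Lemma ylist_reduced g : g <> gone G -> reduced (ylist g).
Proof.
move=> g_ne1; have ne_cube : g * g * g <> g * g := fun e => g_ne1 (gmul_idPl e).
by rewrite /= /linv /=; do !split; case=> // /esym.
Qed.

Definition ysubst_word (j : option nontriv) : seq ((T * bool) * bool) :=
  if j is Some g then ylist (proj1_sig g) else [:: ((gone G, false), true)].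

Definition ysubst : fp_elt T (option nontriv) -> fp_elt T bool :=
  fp_lift K (fp_in bool) (fun j => fp_mk (ysubst_word j) (gone G)).

Lemma ysubst_hom : is_hom KU K ysubst.
Proof. exact: fp_lift_hom (fp_in_hom _ _). Qed.

Definition gen_t : fp_elt T (option nontriv) := fp_gen G None.
Definition gen_y (g : nontriv) : fp_elt T (option nontriv) := fp_gen G (Some g).

Lemma ysubst_in g : ysubst (fp_in _ g) = fp_in bool g.
Proof. exact: fp_lift_in. Qed.

Lemma ysubst_t : ysubst gen_t = gen_b G.
Proof. exact: (fp_lift_gen _ (fp_in_hom _ _) None). Qed.

Lemma ysubst_y g (g_ne1 : g <> gone G) :
  ysubst (gen_y (exist _ g g_ne1)) = yword K (conj_a G g) (fp_in bool g) (conj_b G g).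
Proof. by rewrite -ylist_yword; exact: (fp_lift_gen _ (fp_in_hom _ _) (Some _)). Qed.

Local Notation yimage := (subst_letter G ysubst_word).

Lemma ysubst_mk ws k : ysubst (fp_mk ws k) = fp_mk (flatten (map yimage ws)) k.
Proof. exact: fp_lift_subst. Qed.

Lemma yimage_reduced x : reduced (yimage x).
Proof.
case: x => [[h [g|]] b]; last by case: b.
have red_w : reduced (map (lconj G h) (ylist (proj1_sig g))).
  exact/map_lconj_reduced/ylist_reduced/(proj2_sig g).
by case: b; last apply: finv_reduced.
Qed.

Lemma yimage_nonempty x : yimage x <> [::].
Proof. by case: x => [[h [g|]] []]. Qed.

(* If three letters cancel, comparing their G-labels forces g = 1, g' = 1 or y = x^-1. *)
Lemma yimage_some_small_cancel h h' (g g' : nontriv) b b' :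
  ((h', Some g'), b') <> linv ((h, Some g), b) ->
  cancel_len (rev (yimage ((h, Some g), b))) (yimage ((h', Some g'), b')) < 3.
Proof.
case: g g' => [g g_ne1] [g' g'_ne1] ne_y; rewrite ltnNge; apply/negP.
have same_letter : h' = h -> g' = g -> b' = ~~ b -> False.
  move=> eq_h eq_g eq_b; subst h' g' b'; apply: ne_y.
  by congr (_, Some _, _); apply: sig_inj.
case: b b' {ne_y} same_letter => [] [] same_letter /cancel_len3 [] /= [e1] [e2] [e3];
  move: e1 e2 e3; group_simpl => e1 e2 e3.
- by apply: g'_ne1; apply: (@gmul_idPl _ G (h' * g')); rewrite e3 e2.
- have eq_g : g' = g by apply: (@gmul_injl _ G (h * g * g)); rewrite -{1}e1 e2.
  subst g'; apply: same_letter => //.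
  by apply: (@gmul_injr _ G g); apply: (@gmul_injr _ G g).
- by apply: same_letter => //; apply: (@gmul_injl _ G h); rewrite -{1}e1 e2.
- by apply: g_ne1; apply: (@gmul_idPl _ G (h * g)); rewrite -e3 e2.
Qed.

Lemma yimage_none h b : yimage ((h, None), b) = [:: ((h * gone G, false), b)].
Proof. by case: b. Qed.

Lemma yimage_some_head h g b : exists a v, yimage ((h, Some g), b) = a :: v /\ a.1.2 = true.
Proof. by case: b; do 2 eexists; split; first reflexivity. Qed.

Lemma yimage_some_last h g b : exists a ru, rev (yimage ((h, Some g), b)) = a :: ru /\ a.1.2 = true.
Proof. by case: b; do 2 eexists; split; first reflexivity. Qed.

Lemma yimage_small_cancel x y : y <> linv x ->
  2 * cancel_len (rev (yimage x)) (yimage y) < size (yimage x) /\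
  2 * cancel_len (rev (yimage x)) (yimage y) < size (yimage y).
Proof.
case: x y => [[h [g|]] b] [[h' [g'|]] b'] ne_y.
- have := yimage_some_small_cancel ne_y.
  by case: b b' {ne_y} => [] [] /= c_lt3; lia.
- have [a [ru [-> gen_a]]] := yimage_some_last h g b.
  rewrite yimage_none cancel_len_cons0; last by rewrite gen_a.
  by case: b {ne_y}.
- have [a [v [-> gen_a]]] := yimage_some_head h' g' b'.
  rewrite yimage_none [rev _]/= cancel_len_cons0; last by rewrite gen_a.
  by case: b' {ne_y}.
- rewrite !yimage_none /=; case: dec => //= eq_y; case: ne_y.
  by move: eq_y; rewrite /linv /= !gmul1r => -[-> ->].
Qed.

Lemma ysubst_inj : injective ysubst.
Proof.
apply: (hom_inj_of_ker1 ysubst_hom) => p.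
rewrite {1}(fp_eta p) ysubst_mk => /(congr1 (@proj1_sig _ _)) [subst_nil base1].
have word_nil : fp_word p = [::].
  case E: (fp_word p) => [|x ws] //; exfalso.
  apply: (fsubst_nonempty yimage_reduced yimage_nonempty yimage_small_cancel (ws := x :: ws)) => //.
    by rewrite -E; apply: fp_word_reduced.
  by rewrite -E.
by rewrite (fp_eta p) word_nil base1.
Qed.

End YSubstitution.

Section UnaryRealization.
Variables (T : Type) (G : group_on T) (f : T -> T).
Local Notation K := (fp_group bool G).
Local Notation nontriv := {g : T | g <> gone G}.
Local Notation KU := (fp_group (option nontriv) G).
Local Notation fp_inK := (fp_in bool).
Local Notation fp_inU := (fp_in (option nontriv)).

Definition ytwist (g : nontriv) : fp_elt T (option nontriv) :=
  gconj KU (gen_t G) (fp_inU (f (proj1_sig g))).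
Definition tau_gen (j : option nontriv) : fp_elt T (option nontriv) :=
  if j is Some g then gmul KU (ytwist g) (gen_y g) else gen_t G.
Definition tau_inv_gen (j : option nontriv) : fp_elt T (option nontriv) :=
  if j is Some g then gmul KU (ginv KU (ytwist g)) (gen_y g) else gen_t G.

Definition tau : fp_elt T (option nontriv) -> fp_elt T (option nontriv) :=
  fp_lift KU fp_inU tau_gen.
Definition tau_inv : fp_elt T (option nontriv) -> fp_elt T (option nontriv) :=
  fp_lift KU fp_inU tau_inv_gen.

Lemma tau_hom : is_hom KU KU tau.
Proof. exact: fp_lift_hom (fp_in_hom _ _). Qed.

Lemma tau_inv_hom : is_hom KU KU tau_inv.
Proof. exact: fp_lift_hom (fp_in_hom _ _). Qed.

Lemma tau_inv_ytwist g : tau_inv (ytwist g) = ytwist g.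
Proof.
rewrite /ytwist (gconj_hom _ _ tau_inv_hom) /tau_inv fp_lift_in.
by rewrite (fp_lift_gen _ (fp_in_hom _ _) None).
Qed.

Lemma tauK u : tau_inv (tau u) = u.
Proof.
apply: (fp_hom_ext (hom_comp tau_hom tau_inv_hom) (fun _ _ => erefl)) => [g | [g|]].
- by rewrite /tau /tau_inv !fp_lift_in.
- rewrite /tau (fp_lift_gen _ (fp_in_hom _ _) (Some g)) [tau_gen _]/= tau_inv_hom tau_inv_ytwist.
  by rewrite /tau_inv (fp_lift_gen _ (fp_in_hom _ _) (Some g)) [tau_inv_gen _]/= gmulKVl.
- rewrite /tau (fp_lift_gen _ (fp_in_hom _ _) None).
  by rewrite /tau_inv (fp_lift_gen _ (fp_in_hom _ _) None).
Qed.

Lemma tau_inj : injective tau.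
Proof. by move=> u v eq_uv; rewrite -(tauK u) -(tauK v) eq_uv. Qed.

Definition psi (u : fp_elt T (option nontriv)) : fp_elt T bool := sigma G (ysubst (tau u)).

Lemma psi_hom : is_hom KU K psi.
Proof. exact: hom_comp (hom_comp tau_hom (@ysubst_hom _ G)) (sigma_hom G). Qed.

Lemma psi_inj : injective psi.
Proof. by move=> u v /sigma_inj /ysubst_inj /tau_inj. Qed.

Lemma tau_in g : tau (fp_inU g) = fp_inU g.
Proof. exact: fp_lift_in. Qed.

Lemma psi_in g : psi (fp_inU g) = conj_a G g.
Proof. by rewrite /psi tau_in ysubst_in sigma_in. Qed.

Lemma psi_t : psi (gen_t G) = ginv K (gen_a G).
Proof. by rewrite /psi /tau (fp_lift_gen _ (fp_in_hom _ _) None) ysubst_t sigma_b. Qed.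

Lemma psi_y g (g_ne1 : g <> gone G) : psi (gen_y (exist _ g g_ne1)) =
  gmul K (fp_inK (f g)) (yword K (conj_b G g) (conj_a G g) (fp_inK g)).
Proof.
rewrite /psi /tau (fp_lift_gen _ (fp_in_hom _ _) (Some _)) [tau_gen _]/= /ytwist.
rewrite (@ysubst_hom _ G) (gconj_hom _ _ (@ysubst_hom _ G)) ysubst_t ysubst_in ysubst_y.
rewrite (sigma_hom G) (gconj_hom _ _ (sigma_hom G)) sigma_b sigma_in.
by rewrite (yword_hom _ _ _ (sigma_hom G)) sigma_conj_a sigma_in sigma_conj_b gconjK.
Qed.

Section Decoding.
Variables (V : Type) (M : group_on V) (j : fp_elt T bool -> V) (c : V).
Hypothesis j_hom : is_hom K M j.
Hypothesis conj_ysubst : forall u, gconj M c (j (ysubst u)) = j (psi u).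

Lemma decode_conj g : g <> gone G -> decode M (j (fp_inK g)) c = j (fp_inK (f g)).
Proof.
move=> g_ne1.
have conj_in : gconj M c (j (fp_inK g)) = j (conj_a G g).
  by rewrite -(@ysubst_in _ G) conj_ysubst psi_in.
have conj_cb : gconj M c (j (conj_b G g)) = j (fp_inK g).
  rewrite /conj_b (gconj_hom _ _ j_hom) gconj_gconj -ysubst_t conj_ysubst psi_t conj_in.
  by rewrite -(gconj_hom _ _ j_hom) /conj_a gconjK.
have conj_b_in : gconj M (ginv M c) (j (fp_inK g)) = j (conj_b G g).
  by rewrite -conj_cb gconjK.
have conj_y : gconj M c (j (yword K (conj_a G g) (fp_inK g) (conj_b G g))) =
              gmul M (j (fp_inK (f g))) (j (yword K (conj_b G g) (conj_a G g) (fp_inK g))).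
  by rewrite -(ysubst_y g_ne1) conj_ysubst psi_y j_hom.
rewrite /decode conj_in conj_b_in -!(yword_hom _ _ _ j_hom) conj_y.
by rewrite gmulKr.
Qed.

End Decoding.

End UnaryRealization.

Theorem realize_unary (T : Type) (G : group_on T) (f : T -> T) :
  exists (U : Type) (M : group_on U) (emb : T -> U) (c : U),
    [/\ is_hom G M emb, injective emb, (forall x, emb x <> c) &
        forall g, g <> gone G -> decode M (emb g) c = emb (f g)].
Proof.
have [Y [act [t [act_hom [act_inj t_conj]]]]] :=
  hnn_embedding (@ysubst_hom _ G) (psi_hom f) (@ysubst_inj _ G) (psi_inj (f := f)).
pose M := prod_group (sym_group Y) bool_group.
pose j k : perm Y * bool := (act k, false).
have j_hom : is_hom (fp_group bool G) M j by move=> k k'; rewrite /j act_hom.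
have conj_ysubst (u : fp_elt T (option {g : T | g <> gone G})) :
    gconj M (t, true) (j (ysubst u)) = j (psi f u).
  transitivity (gconj (sym_group Y) t (act (ysubst u)), false); first by [].
  by rewrite /gconj t_conj gmulKr.
exists (perm Y * bool)%type, M, (fun g => j (fp_in bool g)), (t, true); split.
- exact: hom_comp (fp_in_hom _ _) j_hom.
- by move=> x y [eq_act]; apply: (@fp_in_inj _ bool); apply: act_inj.
- by [].
- by move=> g; apply: (decode_conj j_hom conj_ysubst).
Qed.

Section Words.
Variable n : nat.

Definition wconj (c x : word n) : word n := wmul (wmul c x) (winv c).

Definition wyword (p x q : word n) : word n :=
  wmul p (wmul x (wmul q (wmul (winv p) (wmul (winv x) (winv x))))).

Definition wdecode (x : word n) : word n :=
  let A := wconj (wy n) x in let B := wconj (winv (wy n)) x in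
  wmul (wconj (wy n) (wyword A x B)) (winv (wyword B A x)).

Lemma weval_wmul (U : Type) (M : group_on U) gs c (u v : word n) :
  weval M gs c (wmul u v) = gmul M (weval M gs c u) (weval M gs c v).
Proof. by []. Qed.

Lemma weval_wdecode (U : Type) (M : group_on U) gs c x :
  weval M gs c (wdecode x) = decode M (weval M gs c x) c.
Proof. by []. Qed.

End Words.

Section GeneratedRealization.
Variables (n : nat) (T U : Type) (G : group_on T) (M : group_on U).
Variables (emb : T -> U) (c : U) (w : word n) (I : Type) (arg : I -> 'I_n -> T) (val : I -> T).
Hypotheses (emb_hom : is_hom G M emb) (emb_inj : injective emb) (emb_neq_c : forall x, emb x <> c).
Hypothesis emb_word : forall s, weval M (fun i => emb (arg s i)) c w = emb (val s).

Local Notation A := (fun h => (exists x, h = emb x) \/ h = c).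
Local Notation H := (gen_group M A).

Lemma weval_gen (gs : 'I_n -> {h | generated M A h}) (d : {h | generated M A h}) v :
  proj1_sig (weval H gs d v) = weval M (fun i => proj1_sig (gs i)) (proj1_sig d) v.
Proof. by elim: v => //= [v1 -> v2 ->| v ->]. Qed.

Lemma realization_generated :
  exists (V : Type) (H : group_on V) (emb' : T -> V) (c' : V),
    (is_hom G H emb' /\ injective emb') /\ (forall x, emb' x <> c') /\
    (forall s, weval H (fun i => emb' (arg s i)) c' w = emb' (val s)) /\
    generated_by H (fun h => (exists x, h = emb' x) \/ h = c').
Proof.
pose emb' x : {h | generated M A h} :=
  exist _ (emb x) (gen_base M (or_introl (ex_intro _ x erefl))).
pose c' : {h | generated M A h} := exist _ c (gen_base M (or_intror erefl)).
exists {h | generated M A h}, H, emb', c'; split; [split | split; [|split]].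
- by move=> x y; apply: sig_inj; rewrite /= emb_hom.
- by move=> x y /(congr1 (@proj1_sig _ _)) /emb_inj.
- by move=> x /(congr1 (@proj1_sig _ _)) /emb_neq_c.
- by move=> s; apply: sig_inj; rewrite weval_gen emb_word.
- move=> S S_sub S_gen; apply: (gen_group_generated S_sub) => -[h gh] [[x eq_h] | eq_h];
    apply: S_gen; [left; exists x | right]; exact: sig_inj.
Qed.

End GeneratedRealization.

Section NaryReduction.
Variables (T : Type) (G : group_on T) (n' : nat).
Local Notation n := n'.+1.
Local Notation "x * y" := (gmul G x y).
Local Notation K1 := (fp_group unit G).
Local Notation nontriv_tuple := {gs : 'I_n -> T | forall i, gs i <> gone G}.
Variable f : nontriv_tuple -> T.

Definition gen_s : fp_elt T unit := fp_gen G tt.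
Local Notation fp_in1 := (fp_in unit).

Fixpoint prefix_prod (gs : 'I_n -> T) (m : nat) : T :=
  if m is m'.+1 then prefix_prod gs m' * gs (inord m') else gone G.

Fixpoint encode (gs : 'I_n -> T) (m : nat) : fp_elt T unit :=
  if m is m'.+1 then gmul K1 (encode gs m') (gmul K1 (fp_in1 (gs (inord m'))) gen_s) else gone K1.

Definition encode_word (gs : 'I_n -> T) (m : nat) : seq ((T * unit) * bool) :=
  mkseq (fun i => ((prefix_prod gs i.+1, tt), true)) m.

Lemma encode_mk gs m : encode gs m = fp_mk (encode_word gs m) (prefix_prod gs m).
Proof.
elim: m => // m IHm; rewrite [encode _ _]/= IHm /gen_s /fp_gen /fp_in /=.
rewrite !fp_mul_mk; apply: fp_mk_eq; last by group_simpl.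
by rewrite /encode_word mkseqS -cats1 /lconj /= gmul1r.
Qed.

Lemma encode_word_reduced gs m : reduced (encode_word gs m).
Proof. by apply: reduced_all_pos; rewrite all_map; apply/allP. Qed.

Lemma encode_word_inj gs gs' : encode_word gs n = encode_word gs' n -> gs = gs'.
Proof.
move=> eq_w; have eq_pp i : i <= n -> prefix_prod gs i = prefix_prod gs' i.
  case: i => // i le_i; move/(congr1 (fun w => nth ((gone G, tt), true) w i)): eq_w.
  by rewrite !nth_mkseq // => -[].
apply: functional_extensionality => i; rewrite -(inord_val i).
apply: (@gmul_injl _ G (prefix_prod gs i)).
by rewrite -[LHS]/(prefix_prod gs i.+1) (eq_pp i.+1) // (eq_pp i) // ltnW.
Qed.

Lemma encode_inj gs gs' : encode gs n = encode gs' n -> gs = gs'.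
Proof.
rewrite !encode_mk => /(congr1 (@fp_word _ _)).
by rewrite !fp_word_mk !freduce_id; [apply: encode_word_inj | apply: encode_word_reduced..].
Qed.

Lemma fp_in_neq_encode g gs : fp_in1 g <> encode gs n.
Proof.
rewrite encode_mk => /(congr1 (fun p => size (fp_word p))).
by rewrite !fp_word_mk (freduce_id (encode_word_reduced gs n)) size_mkseq.
Qed.

Definition unary_target (k : fp_elt T unit) : fp_elt T unit :=
  match dec (exists s : nontriv_tuple, k = encode (proj1_sig s) n) with
  | left ex_s => fp_in1 (f (proj1_sig (constructive_indefinite_description _ ex_s)))
  | right _ => gen_s
  end.

Lemma unary_target_encode s : unary_target (encode (proj1_sig s) n) = fp_in1 (f s).
Proof.
rewrite /unary_target; case: dec => [ex_s | []]; last by exists s.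
case: constructive_indefinite_description => s' /= /encode_inj eq_s.
by congr (fp_in1 (f _)); apply: sig_inj.
Qed.

Lemma unary_target_in g : unary_target (fp_in1 g) = gen_s.
Proof.
rewrite /unary_target; case: dec => // ex_s; exfalso.
by case: ex_s => s; apply: fp_in_neq_encode.
Qed.

Lemma encode_neq1 gs : encode gs n <> gone K1.
Proof. by move=> /esym; apply: fp_in_neq_encode. Qed.

Lemma fp_in_neq1 g : g <> gone G -> fp_in1 g <> gone K1.
Proof. by move=> g_ne1 eq_g; apply: g_ne1; apply: (@fp_in_inj _ unit). Qed.

End NaryReduction.

Section EncodingWord.
Variable n' : nat.
Local Notation n := n'.+1.

Definition wgen_s : word n := wdecode (wx ord0).

Fixpoint wencode (m : nat) : word n :=
  if m is m'.+1 then wmul (wencode m') (wmul (wx (inord m')) wgen_s) else wone n.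

Lemma wencodeS m : wencode m.+1 = wmul (wencode m) (wmul (wx (inord m)) wgen_s).
Proof. by []. Qed.

Definition nary_word : word n := wdecode (wencode n).

End EncodingWord.

Lemma realize_nary (T : Type) (G : group_on T) (n' : nat)
    (f : {gs : 'I_n'.+1 -> T | forall i, gs i <> gone G} -> T) :
  exists (U : Type) (M : group_on U) (emb : T -> U) (c : U),
    [/\ is_hom G M emb, injective emb, (forall x, emb x <> c) &
        forall s, weval M (fun i => emb (proj1_sig s i)) c (nary_word n') = emb (f s)].
Proof.
have [U [M [emb [c [emb_hom emb_inj emb_neq_c emb_decode]]]]] :=
  realize_unary (fp_group unit G) (unary_target f).
exists U, M, (fun g => emb (fp_in unit g)), c; split.
- exact: hom_comp (fp_in_hom _ _) emb_hom.
- by move=> x y /emb_inj; apply: (@fp_in_inj _ unit).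
- by [].
move=> [gs gs_ne1]; pose embs i := emb (fp_in unit (gs i)).
have ev_s : weval M embs c (wgen_s n') = emb (gen_s G).
  by rewrite weval_wdecode emb_decode ?unary_target_in //; apply: fp_in_neq1.
have ev_encode m : weval M embs c (wencode n' m) = emb (encode G gs m).
  elim: m => [|m IHm]; first exact: (esym (hom1 emb_hom)).
  by rewrite wencodeS 2!weval_wmul IHm ev_s -!emb_hom.
rewrite /nary_word weval_wdecode ev_encode emb_decode; last exact: encode_neq1.
by rewrite (unary_target_encode f (exist _ gs gs_ne1)).
Qed.

Theorem lemma2p4 (n : nat) (hn : 1 <= n) :
  exists w : word n,
  forall (T : Type) (G : group_on T)
         (f : {g : 'I_n -> T | forall i, g i <> gone G} -> T),
  exists (U : Type) (H : group_on U) (iota : T -> U) (c : U),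
    (* (a) G <= H, via an injective homomorphism *)
    (is_hom G H iota /\ injective iota) /\
    (* (b) c \in H \ G *)
    (forall x, iota x <> c) /\
    (* (c) w(g_0,...,g_{n-1},c) = f(g) for all g in (G \ {1})^n *)
    (forall gs : {g : 'I_n -> T | forall i, g i <> gone G},
        weval H (fun i => iota (proj1_sig gs i)) c w = iota (f gs)) /\
    (* (d) H is generated by G \cup {c} *)
    generated_by H (fun h => (exists x, h = iota x) \/ h = c).
Proof.
case: n hn => // n' _; exists (nary_word n') => T G f.
have [U [M [emb [c [emb_hom emb_inj emb_neq_c emb_word]]]]] := realize_nary f.
exact: realization_generated emb_hom emb_inj emb_neq_c emb_word.
Qed.
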